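(* Let $n\ge 2$. Then $\mathrm{P}=\Gamma^{(0)}=\Gamma^{(1)}$, where $$\Gamma^{(j)}=\{T\in\mathrm{C}^\times:\ T\,\mathrm{C}^{(j)}\,T^{-1}\subseteq\mathrm{C}^{(j)}\},\quad j=0,1.$$ Explicitly, $\mathrm{P}=\mathrm{C}^{\times(0)}\cup\mathrm{C}^{\times(1)}$ if $n$ is even, and $\mathrm{P}=\mathrm{Z}^\times\,\mathrm{C}^{\times(0)}$ if $n$ is odd.
   Context: Let $\mathrm{C}$ be either the real Clifford algebra $C\ell_{p,q}$ with $p+q=n$, or the complex Clifford algebra $C\ell(\mathbb{C}^n)$. It has identity $e$ and generators $e_1,\dots,e_n$ satisfying $e_ae_b+e_be_a=2\eta_{ab}e$. In the real case $\eta=\mathrm{diag}(1,\dots,1,-1,\dots,-1)$ with $p$ entries $+1$ and $q$ entries $-1$. In the complex case $\eta=I_n$. $\mathrm{C}^k$ is the grade-$k$ subspace, spanned by the products $e_{a_1}\cdots e_{a_k}$ with $a_1<\dots<a_k$. The even subspace is $\mathrm{C}^{(0)}=\bigoplus_{k\text{ even}}\mathrm{C}^k$ and the odd subspace is $\mathrm{C}^{(1)}=\bigoplus_{k\text{ odd}}\mathrm{C}^k$. For $S\subseteq\mathrm{C}$, $S^\times$ is the set of elements of $S$ invertible in $\mathrm{C}$, and $\mathrm{C}^{\times(j)}:=(\mathrm{C}^{(j)})^\times$. $\mathrm{Z}$ is the center of $\mathrm{C}$: $\mathrm{Z}=\mathrm{C}^0$ for $n$ even and $\mathrm{Z}=\mathrm{C}^0\oplus\mathrm{C}^n$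 for $n$ odd. Define $$\mathrm{P}:=\mathrm{Z}^\times(\mathrm{C}^{\times(0)}\cup\mathrm{C}^{\times(1)})=\{WT:\ W\in\mathrm{Z}^\times,\ T\in\mathrm{C}^{\times(0)}\cup\mathrm{C}^{\times(1)}\}.$$ *)

From HB Require Import structures.
From mathcomp Require Import all_boot all_order all_algebra.
From mathcomp Require Import reals.
From mathcomp Require Import complex.
Set Implicit Arguments. Unset Strict Implicit. Unset Printing Implicit Defensive.
Import Order.TTheory GRing.Theory Num.Theory.
Local Open Scope ring_scope.

Section Clifford.
Variables (K : fieldType) (n : nat) (eta : 'I_n -> K).

(* elements of the Clifford algebra: coordinates on the blades e_A *)
Definition clif := {ffun {set 'I_n} -> K}.

Definition symdiff (A B : {set 'I_n}) : {set 'I_n} := (A :\: B) :|: (B :\: A).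

(* e_A e_B = (-1)^{#{(a,b) in A x B | a > b}} (prod_{i in A cap B} eta_i) e_{A symdiff B},
   where e_A = e_{a_1} ... e_{a_k} with a_1 < ... < a_k. *)
Definition blade_coef (A B : {set 'I_n}) : K :=
  (-1) ^+ #|[set ab : 'I_n * 'I_n | [&& ab.1 \in A, ab.2 \in B & (ab.2 < ab.1)%N]]|
  * \prod_(i in A :&: B) eta i.

Definition cmul (x y : clif) : clif :=
  [ffun C => \sum_(A : {set 'I_n}) \sum_(B : {set 'I_n} | symdiff A B == C)
               x A * y B * blade_coef A B].

Definition cone : clif := [ffun A => if A == set0 then 1 else 0].

Definition cgen (i : 'I_n) : clif := [ffun A => if A == [set i] then 1 else 0].

Definition grade (k : nat) (x : clif) : Prop := forall A : {set 'I_n}, #|A| != k -> x A = 0.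

Definition parity (j : bool) (x : clif) : Prop := forall A : {set 'I_n}, odd #|A| != j -> x A = 0.

Definition cinverse (x y : clif) : Prop := cmul x y = cone /\ cmul y x = cone.
Definition cunit (x : clif) : Prop := exists y, cinverse x y.

Definition center (x : clif) : Prop := forall y, cmul x y = cmul y x.

Definition Pset (x : clif) : Prop :=
  exists W T, [/\ center W, cunit W, cunit T, parity false T \/ parity true T
                & x = cmul W T].

Definition Gamma (j : bool) (T : clif) : Prop :=
  cunit T /\ forall U, cinverse T U ->
    forall X, parity j X -> parity j (cmul (cmul T X) U).

Definition theorem4_concl : Prop :=
  (forall x, Pset x <-> Gamma false x) /\
  (forall x, Pset x <-> Gamma true x) /\
  (~~ odd n -> forall x, Pset x <->
       ((cunit x /\ parity false x) \/ (cunit x /\ parity true x))) /\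
  (odd n -> forall x, Pset x <->
       exists W T, [/\ center W, cunit W, cunit T, parity false T & x = cmul W T]).

End Clifford.

(* real signature (p,q) on n = p + q generators: eta_a = 1 for a < p, -1 otherwise
   (q is determined as n - p; the theorem assumes p + q = n) *)
Definition sig_eta (R : nzRingType) (n p : nat) (a : 'I_n) : R :=
  if (a < p)%N then 1 else -1.
Arguments sig_eta : clear implicits.

From mathcomp Require Import all_boot all_order all_algebra.
From mathcomp Require Import reals complex.
From mathcomp Require Import zify ring.
Set Implicit Arguments. Unset Strict Implicit. Unset Printing Implicit Defensive.
Import Order.TTheory GRing.Theory Num.Theory.
Local Open Scope ring_scope.

(* 1. Blade combinatorics: with e_A e_B = c(A,B) e_(A symdiff B), the
      coefficient c is a 2-cocycle, trivial on the empty blade, and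
      c(A,B) = (-1)^(|A||B| + |A n B|) c(B,A); so C is associative and unital.
   2. The grade involution alpha is an automorphism and x is in C^(j) iff
      alpha x = (-1)^j x.
   3. If e_k S = R e_k for every generator e_k, then S lies in span(1, e_N),
      e_N the pseudoscalar; e_N is central for n odd, and e_N x = alpha(x) e_N
      for n even.
   4. P <= Gamma^(j): conjugation by a homogeneous unit preserves parity and
      central factors cancel.
   5. Gamma^(j) <= P: for x in Gamma^(j) with inverse U, S := U alpha(x)
      commutes with C^(j), hence lies in span(1, e_N), and satisfies
      x S = alpha(x) and S alpha(S) = 1.  Solving these equations in the
      two-dimensional algebra span(1, e_N) exhibits x as a central unit times
      a homogeneous unit (and rules out a pseudoscalar part for n even).
   6. The explicit descriptions follow from 3: for n even central elements
      are scalars, for n odd an odd unit T is e_N^-1 (e_N T) with e_N T even. *)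

Section SymmetricDifference.
Variable T : finType.
Implicit Types A B C : {set T}.

Definition symd A B := (A :\: B) :|: (B :\: A).

Lemma in_symd A B x : (x \in symd A B) = (x \in A) (+) (x \in B).
Proof. by rewrite !inE; case: (x \in A); case: (x \in B). Qed.

Lemma symdC A B : symd A B = symd B A.
Proof. by apply/setP=> x; rewrite !in_symd addbC. Qed.

Lemma symdA A B C : symd A (symd B C) = symd (symd A B) C.
Proof. by apply/setP=> x; rewrite !in_symd addbA. Qed.

Lemma symd0 A : symd A set0 = A.
Proof. by apply/setP=> x; rewrite !in_symd inE addbF. Qed.

Lemma symd0l A : symd set0 A = A.
Proof. by rewrite symdC symd0. Qed.

Lemma symdv A : symd A A = set0.
Proof. by apply/setP=> x; rewrite !in_symd inE addbb. Qed.

Lemma symdK A B : symd A (symd A B) = B.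
Proof. by rewrite symdA symdv symd0l. Qed.

Lemma symdKr A B : symd (symd B A) A = B.
Proof. by rewrite -symdA symdv symd0. Qed.

Lemma symdKC A C : symd (symd C A) C = A.
Proof. by rewrite symdC symdK. Qed.

Lemma symd_eq A B C : (symd A B == C) = (B == symd A C).
Proof. by apply/eqP/eqP=> [<-|->]; rewrite symdK. Qed.

Lemma odd_card_symd A B : odd #|symd A B| = odd #|A| (+) odd #|B|.
Proof.
rewrite /symd cardsU (_ : (A :\: B) :&: (B :\: A) = set0); last first.
  by apply/setP=> x; rewrite !inE; case: (x \in A); case: (x \in B).
rewrite cards0 subn0 -(cardsID B A) -(cardsID A B) setIC !oddD.
by case: (odd #|B :&: A|); case: (odd #|A :\: B|); case: (odd #|B :\: A|).
Qed.

Lemma odd_card_xor A B C :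
  (forall x, (x \in C) = (x \in A) (+) (x \in B)) -> odd #|C| = odd #|A| (+) odd #|B|.
Proof.
move=> h; have -> : C = symd A B by apply/setP=> x; rewrite h in_symd.
exact: odd_card_symd.
Qed.

End SymmetricDifference.

Section BladeCoefficient.
Variables (K : fieldType) (n : nat) (eta : 'I_n -> K).
Implicit Types A B C : {set 'I_n}.
Local Notation c := (blade_coef eta).

Definition inversions A B :=
  #|[set ab : 'I_n * 'I_n | [&& ab.1 \in A, ab.2 \in B & (ab.2 < ab.1)%N]]|.

Definition eta_prod A := \prod_(i in A) eta i.

Lemma eta_prodE A : eta_prod A = \prod_i (if i \in A then eta i else 1).
Proof. by rewrite /eta_prod big_mkcond. Qed.

Lemma coefE A B : c A B = (-1) ^+ inversions A B * eta_prod (A :&: B).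
Proof. by []. Qed.

Lemma sign_odd (m k : nat) : odd m = odd k -> (-1) ^+ m = (-1) ^+ k :> K.
Proof. by move=> h; rewrite -signr_odd h signr_odd. Qed.

Lemma sign_sq (m : nat) : (-1) ^+ m * (-1) ^+ m = 1 :> K.
Proof. by rewrite -exprD (@sign_odd _ 0) // addnn odd_double. Qed.

Lemma odd_inversionsDl A B C :
  odd (inversions (symd A B) C) = odd (inversions A C) (+) odd (inversions B C).
Proof.
apply: odd_card_xor => ab; rewrite !inE.
by case: (ab.1 \in A); case: (ab.1 \in B); case: (ab.2 \in C); case: (ab.2 < ab.1)%N.
Qed.

Lemma odd_inversionsDr A B C :
  odd (inversions A (symd B C)) = odd (inversions A B) (+) odd (inversions A C).
Proof.
apply: odd_card_xor => ab; rewrite !inE.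
by case: (ab.1 \in A); case: (ab.2 \in B); case: (ab.2 \in C); case: (ab.2 < ab.1)%N.
Qed.

(* The cocycle identity, which is associativity on the blade basis. *)
Lemma coef_cocycle A B C : c A B * c (symd A B) C = c B C * c A (symd B C).
Proof.
rewrite !coefE mulrACA [RHS]mulrACA -!exprD; congr (_ * _).
  apply: sign_odd; rewrite !oddD odd_inversionsDl odd_inversionsDr.
  by case: (odd (inversions A B)); case: (odd (inversions A C));
     case: (odd (inversions B C)).
rewrite !eta_prodE -!big_split /=; apply: eq_bigr => i _.
rewrite !inE.
by case: (i \in A); case: (i \in B); case: (i \in C); rewrite /= ?mulr1 ?mul1r.
Qed.

Lemma coef0l B : c set0 B = 1.
Proof.
rewrite coefE set0I /eta_prod big_set0 mulr1 /inversions.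
by rewrite (_ : [set _ | _] = set0) ?cards0 ?expr0 //; apply/setP=> ab; rewrite !inE.
Qed.

Lemma coef0r A : c A set0 = 1.
Proof.
rewrite coefE setI0 /eta_prod big_set0 mulr1 /inversions.
rewrite (_ : [set _ | _] = set0) ?cards0 ?expr0 //.
by apply/setP=> ab; rewrite !inE andbF.
Qed.

Lemma card_pairs (P : pred ('I_n * 'I_n)) :
  #|[set ab | P ab]| = (\sum_a \sum_b P (a, b))%N.
Proof.
rewrite -sum1_card big_mkcond /= pair_bigA /=; apply: eq_bigr => [[a b]] _.
by rewrite inE.
Qed.

(* Each pair of A x B is an inversion of (A,B), of (B,A), or a diagonal pair. *)
Lemma inversions_sum A B :
  (inversions A B + inversions B A + #|A :&: B| = #|A| * #|B|)%N.
Proof.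
have diag : #|A :&: B| =
    #|[set ab : 'I_n * 'I_n | [&& ab.1 \in A, ab.2 \in B & ab.1 == ab.2]]|.
  rewrite card_pairs -sum1_card big_mkcond /=; apply: eq_bigr => a _.
  rewrite (bigD1 a) //= big1 ?addn0; last first.
    by move=> b hb; rewrite eq_sym (negbTE hb) !andbF.
  by rewrite inE eqxx andbT.
have swap : inversions B A =
    (\sum_a \sum_b [&& b \in B, a \in A & (a < b)%N])%N.
  by rewrite /inversions card_pairs exchange_big.
have prod : #|setX A B| =
    #|[set ab : 'I_n * 'I_n | (ab.1 \in A) && (ab.2 \in B)]|.
  by congr (#|_|); apply/setP=> ab; rewrite !inE.
rewrite diag swap -cardsX prod /inversions !card_pairs -!big_split /=.
apply: eq_bigr => a _; rewrite -!big_split /=; apply: eq_bigr => b _.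
by rewrite -val_eqE /=; case: (a \in A); case: (b \in B); case: (ltngtP a b).
Qed.

Lemma coef_swap A B : c A B = (-1) ^+ (#|A| * #|B| + #|A :&: B|) * c B A.
Proof.
rewrite !coefE (setIC B A) mulrA -exprD; congr (_ * _); apply: sign_odd.
rewrite -inversions_sum.
have -> : (inversions A B + inversions B A + #|A :&: B| + #|A :&: B|
           + inversions B A =
           inversions A B + (inversions B A + #|A :&: B|).*2)%N
  by rewrite -addnn; lia.
by rewrite oddD odd_double addbF.
Qed.

Lemma coef_neq0 : (forall i, eta i != 0) -> forall A B, c A B != 0.
Proof.
by move=> etaNZ A B; rewrite coefE mulf_neq0 ?signr_eq0 //; apply/prodf_neq0.
Qed.

End BladeCoefficient.

Section Algebra.
Variables (K : fieldType) (n : nat) (eta : 'I_n -> K).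
Implicit Types A B C D : {set 'I_n}.
Implicit Types x y z : clif K n.
Local Notation "x ** y" := (cmul eta x y) (at level 40, left associativity).
Local Notation c := (blade_coef eta).
Local Notation cone := (cone K n).

Definition cadd x y : clif K n := [ffun A => x A + y A].
Definition cscale (k : K) x : clif K n := [ffun A => k * x A].

Definition blade A : clif K n := [ffun C => if C == A then 1 else 0].

Lemma cone_blade : cone = blade set0. Proof. by []. Qed.
Lemma cgen_blade k : cgen K k = blade [set k]. Proof. by []. Qed.

Lemma cmulE x y C : (x ** y) C = \sum_A x A * y (symd A C) * c A (symd A C).
Proof.
rewrite ffunE; apply: eq_bigr => A _; rewrite (big_pred1 (symd A C)) // => B /=.
by rewrite symd_eq.
Qed.

Lemma cmulA x y z : x ** y ** z = x ** (y ** z).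
Proof.
apply/ffunP=> D; rewrite !cmulE.
under eq_bigr do rewrite cmulE !big_distrl /=.
rewrite exchange_big /=; apply: eq_bigr => A _.
rewrite cmulE big_distrr big_distrl /=.
rewrite (reindex_inj (can_inj (symdK A))) /=; apply: eq_bigr => B _.
rewrite symdK.
have -> : symd (symd A B) D = symd B (symd A D) by rewrite !symdA (symdC B A).
set C := symd B (symd A D).
have -> : symd A D = symd B C by rewrite /C symdK.
transitivity (x A * y B * z C * (c A B * c (symd A B) C)); first by ring.
rewrite coef_cocycle; ring.
Qed.

Lemma blade_mull A x : blade A ** x = [ffun C => x (symd A C) * c A (symd A C)].
Proof.
apply/ffunP=> C; rewrite cmulE (bigD1 A) //= big1 ?addr0; last first.
  by move=> B hB; rewrite ffunE (negbTE hB) !mul0r.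
by rewrite !ffunE eqxx mul1r.
Qed.

Lemma blade_mulr A x : x ** blade A = [ffun C => x (symd C A) * c (symd C A) A].
Proof.
apply/ffunP=> C; rewrite cmulE (bigD1 (symd C A)) //= big1 ?addr0; last first.
  move=> B hB; rewrite ffunE; case: eqP => [e|_]; last by rewrite mulr0 mul0r.
  by case/eqP: hB; rewrite -e symdC symdKr.
by rewrite !ffunE symdKC eqxx mulr1.
Qed.

Lemma blade_mul A B : blade A ** blade B = cscale (c A B) (blade (symd A B)).
Proof.
rewrite blade_mull; apply/ffunP=> C; rewrite !ffunE symd_eq.
case: eqP => [->|_]; last by rewrite mul0r mulr0.
by rewrite symdK mul1r mulr1.
Qed.

Lemma cmul1l x : cone ** x = x.
Proof.
by rewrite cone_blade blade_mull; apply/ffunP=> C; rewrite ffunE symd0l coef0l mulr1.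
Qed.

Lemma cmul1r x : x ** cone = x.
Proof.
by rewrite cone_blade blade_mulr; apply/ffunP=> C; rewrite ffunE symd0 coef0r mulr1.
Qed.

Lemma cmulDl x y z : cadd x y ** z = cadd (x ** z) (y ** z).
Proof.
apply/ffunP=> C; rewrite cmulE [in RHS]ffunE !cmulE -big_split /=.
by apply: eq_bigr => A _; rewrite ffunE !mulrDl.
Qed.

Lemma cmulDr x y z : x ** cadd y z = cadd (x ** y) (x ** z).
Proof.
apply/ffunP=> C; rewrite cmulE [in RHS]ffunE !cmulE -big_split /=.
by apply: eq_bigr => A _; rewrite ffunE mulrDr !mulrDl.
Qed.

Lemma cmulZl k x y : cscale k x ** y = cscale k (x ** y).
Proof.
apply/ffunP=> C; rewrite cmulE [in RHS]ffunE !cmulE big_distrr /=.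
by apply: eq_bigr => A _; rewrite ffunE !mulrA.
Qed.

Lemma cmulZr k x y : x ** cscale k y = cscale k (x ** y).
Proof.
apply/ffunP=> C; rewrite cmulE [in RHS]ffunE !cmulE big_distrr /=.
by apply: eq_bigr => A _; rewrite ffunE; ring.
Qed.

Lemma cscaleA k l x : cscale k (cscale l x) = cscale (k * l) x.
Proof. by apply/ffunP=> C; rewrite !ffunE mulrA. Qed.

Lemma cscale1 x : cscale 1 x = x.
Proof. by apply/ffunP=> C; rewrite !ffunE mul1r. Qed.

Lemma cone_central : center eta cone.
Proof. by move=> y; rewrite cmul1l cmul1r. Qed.

Lemma inv_uniq x y z : cinverse eta x y -> cinverse eta x z -> y = z.
Proof. by case=> _ h2 [h3 _]; rewrite -(cmul1r y) -h3 -cmulA h2 cmul1l. Qed.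

Lemma inv_mul x x' y y' : cinverse eta x x' -> cinverse eta y y' ->
  cinverse eta (x ** y) (y' ** x').
Proof.
case=> h1 h2 [h3 h4]; split.
  by rewrite -cmulA (cmulA x y y') h3 cmul1r h1.
by rewrite -cmulA (cmulA y' x' x) h2 cmul1r h4.
Qed.

Lemma inv_sym x y : cinverse eta x y -> cinverse eta y x.
Proof. by case. Qed.

Lemma inv_cone : cinverse eta cone cone.
Proof. by split; rewrite cmul1l. Qed.

Lemma inv_scale k x y : k * k = 1 -> cinverse eta x y ->
  cinverse eta (cscale k x) (cscale k y).
Proof. by move=> hk [h1 h2]; split; rewrite cmulZl cmulZr cscaleA hk cscale1. Qed.

End Algebra.

Lemma eq_opp_self (K : fieldType) (a : K) : (2 : K) != 0 -> - a = a -> a = 0.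
Proof.
move=> two e; have h2 : a * 2 = a - - a by ring.
rewrite e subrr in h2.
by move/eqP: h2; rewrite mulf_eq0 (negbTE two) orbF => /eqP.
Qed.

Section GradeInvolution.
Variables (K : fieldType) (n : nat) (eta : 'I_n -> K).
Implicit Types A B C : {set 'I_n}.
Implicit Types x y : clif K n.
Local Notation "x ** y" := (cmul eta x y) (at level 40, left associativity).
Local Notation cone := (cone K n).

Definition alpha x : clif K n := [ffun A : {set 'I_n} => (-1) ^+ #|A| * x A].

Definition homog (j : bool) x := alpha x = cscale ((-1) ^+ j) x.

Lemma alpha_mul x y : alpha (x ** y) = alpha x ** alpha y.
Proof.
apply/ffunP=> C; rewrite [LHS]ffunE !cmulE big_distrr /=; apply: eq_bigr => A _.
have sgnC : (-1) ^+ #|C| = (-1) ^+ #|A| * (-1) ^+ #|symd A C| :> K.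
  rewrite -exprD; apply: sign_odd; rewrite oddD odd_card_symd.
  by case: (odd #|A|); case: (odd #|C|).
by rewrite !ffunE sgnC; ring.
Qed.

Lemma alpha_cone : alpha cone = cone.
Proof.
apply/ffunP=> C; rewrite !ffunE; case: eqP => [->|_]; last by rewrite mulr0.
by rewrite cards0 expr0 mulr1.
Qed.

Lemma alphaK x : alpha (alpha x) = x.
Proof. by apply/ffunP=> C; rewrite !ffunE mulrA sign_sq mul1r. Qed.

Lemma alpha_add x y : alpha (cadd x y) = cadd (alpha x) (alpha y).
Proof. by apply/ffunP=> C; rewrite !ffunE mulrDr. Qed.

Lemma alpha_scale k x : alpha (cscale k x) = cscale k (alpha x).
Proof. by apply/ffunP=> C; rewrite !ffunE mulrCA. Qed.

Lemma alpha_inv x y : cinverse eta x y -> cinverse eta (alpha x) (alpha y).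
Proof. by case=> h1 h2; split; rewrite -alpha_mul ?h1 ?h2 alpha_cone. Qed.

Lemma parity_homog : (2 : K) != 0 -> forall j x, parity j x <-> homog j x.
Proof.
move=> two j x; split=> [h|h].
  apply/ffunP=> A; rewrite !ffunE; have [/eqP e|ne] := boolP (odd #|A| == j).
    by rewrite -signr_odd e.
  by rewrite h // !mulr0.
move=> A ne; have := congr1 (fun f : clif K n => f A) h; rewrite !ffunE -signr_odd.
have -> : odd #|A| = ~~ j by move: ne; case: (odd #|A|); case: (j).
rewrite (_ : (-1) ^+ (~~ j) = - (-1) ^+ j :> K); last by case: (j); rewrite ?expr0 ?expr1 ?opprK.
rewrite mulNr => /(eq_opp_self two)/eqP; rewrite mulf_eq0 signr_eq0.
by move/eqP.
Qed.

Lemma homog_parity : (2 : K) != 0 ->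
  forall j x, homog j x -> parity false x \/ parity true x.
Proof. by move=> two [] x h; [right|left]; apply/(parity_homog two). Qed.

Lemma parity_homog_ex : (2 : K) != 0 ->
  forall x, parity false x \/ parity true x -> exists j, homog j x.
Proof. by move=> two x [] /(parity_homog two) h; [exists false|exists true]. Qed.

Lemma homog_mul (i j : bool) x y : homog i x -> homog j y -> homog (i (+) j) (x ** y).
Proof.
rewrite /homog => hx hy.
by rewrite alpha_mul hx hy cmulZl cmulZr cscaleA signr_addb mulrC.
Qed.

Lemma homog_inv (j : bool) x y : cinverse eta x y -> homog j x -> homog j y.
Proof.
move=> hxy hx; apply: (inv_uniq (alpha_inv hxy)); rewrite hx.
exact/inv_scale/hxy/sign_sq.
Qed.

Lemma cgen_homog k : homog true (cgen K k).
Proof.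
apply/ffunP=> C; rewrite !ffunE; case: eqP => [->|_]; last by rewrite !mulr0.
by rewrite cards1.
Qed.

Lemma cgen_sq k : cgen K k ** cgen K k = cscale (eta k) cone.
Proof.
rewrite !cgen_blade blade_mul symdv coefE setIid /eta_prod big_set1.
rewrite (_ : inversions _ _ = 0%N) ?expr0 ?mul1r //.
apply/eqP; rewrite cards_eq0; apply/eqP/setP=> ab; rewrite !inE.
by case: ab => a b /=; case: eqP => // ->; case: eqP => // ->; rewrite ltnn.
Qed.

End GradeInvolution.

Lemma sign_odd_nat (K : fieldType) (m : nat) : odd m -> (-1) ^+ m = -1 :> K.
Proof. by move=> h; rewrite -signr_odd h expr1. Qed.

Lemma sign_even_nat (K : fieldType) (m : nat) : ~~ odd m -> (-1) ^+ m = 1 :> K.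
Proof. by move=> h; rewrite -signr_odd (negbTE h) expr0. Qed.

Section Pseudoscalar.
Variables (K : fieldType) (n : nat) (eta : 'I_n -> K).
Hypothesis etaNZ : forall i, eta i != 0.
Hypothesis n0 : (0 < n)%N.
Implicit Types A B C : {set 'I_n}.
Implicit Types x S R : clif K n.
Local Notation "x ** y" := (cmul eta x y) (at level 40, left associativity).
Local Notation c := (blade_coef eta).
Local Notation cone := (cone K n).
Local Notation eN := (blade K (setT : {set 'I_n})).

Definition lin1N (a b : K) := cadd (cscale a cone) (cscale b eN).

Lemma card1I k B : #|[set k] :&: B| = (k \in B).
Proof.
have [kB|kNB] := boolP (k \in B).
  rewrite (_ : _ :&: _ = [set k]) ?cards1 //.
  by apply/setP=> i; rewrite !inE; case: eqP => // ->.
rewrite (_ : _ :&: _ = set0) ?cards0 //.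
by apply/setP=> i; rewrite !inE; case: eqP => // ->; rewrite (negbTE kNB).
Qed.

Lemma cardT : #|(setT : {set 'I_n})| = n.
Proof. by rewrite cardsT card_ord. Qed.

Lemma setT_neq0 : (setT : {set 'I_n}) != set0.
Proof. by apply/set0Pn; exists (Ordinal n0); rewrite inE. Qed.

Lemma twist_coord k S R : cgen K k ** S = R ** cgen K k ->
  forall B, S B * (-1) ^+ (#|B| + (k \in B)) = R B.
Proof.
rewrite cgen_blade blade_mull blade_mulr => h B.
have := congr1 (fun f : clif K n => f (symd [set k] B)) h; rewrite !ffunE symdK.
rewrite (symdC (symd _ _)) symdK coef_swap cards1 mul1n card1I mulrA.
exact/mulIf/coef_neq0.
Qed.

(* A blade other than 1 and e_N commutes with some generator and anticommutes
   with another, so it cannot occur in S when all the e_k twist S into R. *)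
Lemma twist_support S R : (2 : K) != 0 ->
  (forall k, cgen K k ** S = R ** cgen K k) ->
  forall B, B != set0 -> B != setT -> S B = 0.
Proof.
move=> two h B B0 BT.
have [i iB] := set0Pn _ B0.
have [k kNB] : exists k, k \notin B.
  apply/existsP; move: BT; apply: contraR; rewrite negb_exists => /forallP H.
  by apply/eqP/setP=> j; rewrite inE; move: (H j); rewrite negbK.
have ei := twist_coord (h i) B; have ek := twist_coord (h k) B.
rewrite (negbTE kNB) addn0 in ek; rewrite iB addn1 exprS mulN1r mulrN -ek in ei.
by move/(eq_opp_self two)/eqP: ei; rewrite mulf_eq0 signr_eq0 orbF => /eqP.
Qed.

Lemma twist_lin1N S R : (2 : K) != 0 ->
  (forall k, cgen K k ** S = R ** cgen K k) -> S = lin1N (S set0) (S setT).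
Proof.
move=> two /(twist_support two) h; apply/ffunP=> C; rewrite !ffunE.
have [->|C0] := eqVneq C set0.
  by rewrite ?eqxx eq_sym (negbTE setT_neq0) mulr1 mulr0 addr0.
have [->|CT] := eqVneq C setT.
  by rewrite ?eqxx mulr1 mulr0 add0r.
by rewrite !mulr0 addr0 h.
Qed.

Lemma commute_top S : (2 : K) != 0 -> ~~ odd n ->
  (forall k, cgen K k ** S = S ** cgen K k) -> S setT = 0.
Proof.
move=> two hn h; have := twist_coord (h (Ordinal n0)) setT.
rewrite inE cardT addn1 exprS mulN1r mulrN sign_even_nat // mulr1.
exact: eq_opp_self.
Qed.

Lemma eN_central x : odd n -> eN ** x = x ** eN.
Proof.
move=> hn; rewrite blade_mull blade_mulr; apply/ffunP=> C; rewrite !ffunE (symdC C).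
rewrite coef_swap setTI cardT -mulSnr (@sign_odd _ _ 0) ?expr0 ?mul1r //.
by rewrite oddM /= hn.
Qed.

Lemma eN_even x : ~~ odd n -> eN ** x = alpha x ** eN.
Proof.
move=> hn; rewrite blade_mull blade_mulr; apply/ffunP=> C; rewrite !ffunE (symdC C).
rewrite coef_swap setTI cardT -mulSnr mulrA [_ * x _]mulrC; congr (_ * _ * _).
by apply: sign_odd; rewrite oddM /= (negbTE hn).
Qed.

Lemma alpha_eN : alpha eN = cscale ((-1) ^+ n) eN.
Proof.
apply/ffunP=> C; rewrite !ffunE; case: eqP => [->|_]; last by rewrite !mulr0.
by rewrite cardT.
Qed.

Lemma eN_sq : eN ** eN = cscale (c setT setT) cone.
Proof. by rewrite blade_mul symdv. Qed.

(* Arithmetic of span(1, e_N): with e_N^2 = c(N,N) it is K[t]/(t^2 - c(N,N)). *)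

Lemma lin1N_mul a b a' b' :
  lin1N a b ** lin1N a' b' = lin1N (a * a' + b * b' * c setT setT) (a * b' + b * a').
Proof.
rewrite /lin1N !cmulDl !cmulDr !cmulZl !cmulZr !cmul1l !cmul1r eN_sq.
by apply/ffunP=> C; rewrite !ffunE; ring.
Qed.

Lemma alpha_lin1N a b : alpha (lin1N a b) = lin1N a ((-1) ^+ n * b).
Proof.
rewrite /lin1N alpha_add !alpha_scale alpha_cone alpha_eN cscaleA.
by rewrite (mulrC b).
Qed.

Lemma cscale_lin1N k a b : cscale k (lin1N a b) = lin1N (k * a) (k * b).
Proof. by apply/ffunP=> C; rewrite !ffunE; ring. Qed.

Lemma cscale_cone k : cscale k cone = lin1N k 0.
Proof. by apply/ffunP=> C; rewrite !ffunE mul0r addr0. Qed.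

Lemma cone_lin1N : cone = lin1N 1 0.
Proof. by rewrite -cscale_cone cscale1. Qed.

Lemma lin1N_inj a b a' b' : lin1N a b = lin1N a' b' -> a = a' /\ b = b'.
Proof.
have coord0 u v : lin1N u v set0 = u.
  by rewrite !ffunE eqxx eq_sym (negbTE setT_neq0) mulr1 mulr0 addr0.
have coordT u v : lin1N u v setT = v.
  by rewrite !ffunE eqxx (negbTE setT_neq0) mulr1 mulr0 add0r.
by move=> h; split; [rewrite -(coord0 a b) h coord0|rewrite -(coordT a b) h coordT].
Qed.

Lemma lin1N_central a b : odd n -> center eta (lin1N a b).
Proof.
by move=> hn y; rewrite cmulDl cmulDr !cmulZl !cmulZr cmul1l cmul1r eN_central.
Qed.

End Pseudoscalar.

Section TwistEquations.
Variables (K : fieldType) (n : nat) (eta : 'I_n -> K).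
Hypothesis etaNZ : forall i, eta i != 0.
Hypothesis two : (2 : K) != 0.
Hypothesis n0 : (0 < n)%N.
Implicit Types x S : clif K n.
Local Notation "x ** y" := (cmul eta x y) (at level 40, left associativity).
Local Notation c := (blade_coef eta).
Local Notation cone := (cone K n).
Local Notation eN := (blade K (setT : {set 'I_n})).
Local Notation lin1N := (@lin1N K n).

Lemma Pset_homog_unit (j : bool) x : cunit eta x -> homog j x -> Pset eta x.
Proof.
move=> xu /(homog_parity two) xh; exists cone, x; split=> //; last by rewrite cmul1l.
- exact: cone_central.
- by exists cone; apply: inv_cone.
Qed.

(* In the next three lemmas x is a unit with x S = alpha(x) and S alpha(S) = 1,
   where S = s0 + sN e_N; they show that x lies in P. *)

(* Scalar twist: s0^2 = 1 forces alpha(x) = +-x. *)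
Lemma scalar_twist_Pset x s0 : cunit eta x ->
  x ** cscale s0 cone = alpha x -> s0 * s0 = 1 -> Pset eta x.
Proof.
move=> xu; rewrite cmulZr cmul1r => hx hs.
have : (s0 - 1) * (s0 + 1) == 0.
  have -> : (s0 - 1) * (s0 + 1) = s0 * s0 - 1 by ring.
  by rewrite hs subrr.
rewrite mulf_eq0 subr_eq0 addr_eq0 => /orP[]/eqP hs0; rewrite hs0 in hx.
  by apply: (@Pset_homog_unit false) => //; rewrite /homog -hx.
by apply: (@Pset_homog_unit true) => //; rewrite /homog -hx.
Qed.

(* n even: a twist with nonzero e_N part would make e_N a scalar. *)
Lemma even_pseudo_twist_absurd x s0 sN : ~~ odd n -> sN != 0 -> cunit eta x ->
  x ** lin1N s0 sN = alpha x -> lin1N s0 sN ** alpha (lin1N s0 sN) = cone -> False.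
Proof.
move=> hn sN0 [U [xU Ux]] hx hS.
rewrite alpha_lin1N sign_even_nat // mul1r lin1N_mul cone_lin1N in hS.
have [_ cross] := lin1N_inj n0 hS.
have s00 : s0 = 0.
  have : (s0 * sN) * 2 == 0 by apply/eqP; rewrite -cross; ring.
  by rewrite !mulf_eq0 (negbTE two) (negbTE sN0) !orbF => /eqP.
have hS' : lin1N s0 sN = cscale sN eN by rewrite s00; apply/ffunP=> C; rewrite !ffunE; ring.
rewrite hS' cmulZr in hx.
have eNx : eN ** x = cscale (sN * c setT setT) x.
  by rewrite eN_even // -hx cmulZl cmulA eN_sq cmulZr cmul1r cscaleA.
have eN_scalar : eN = cscale (sN * c setT setT) cone.
  by rewrite -xU -cmulZl -eNx cmulA xU cmul1r.
have := congr1 (fun f : clif K n => f set0) eN_scalar.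
rewrite !ffunE eq_sym (negbTE (setT_neq0 n0)) eqxx => /eqP.
by rewrite eq_sym mulr1 mulf_eq0 (negbTE sN0) (negbTE (coef_neq0 etaNZ _ _)).
Qed.

(* n odd: W = (1 + eps s0) - eps sN e_N is a central unit and
   alpha(W^-1 x) = eps W^-1 x, for a sign eps with 1 + eps s0 <> 0. *)
Lemma odd_pseudo_twist_Pset x s0 sN : odd n -> sN != 0 -> cunit eta x ->
  x ** lin1N s0 sN = alpha x -> lin1N s0 sN ** alpha (lin1N s0 sN) = cone ->
  Pset eta x.
Proof.
move=> hn sN0 [U xU] hx hS.
rewrite alpha_lin1N sign_odd_nat // mulN1r lin1N_mul cone_lin1N in hS.
have [norm _] := lin1N_inj n0 hS.
set cc := c setT setT in norm.
have ccE : cc = (s0 * s0 - 1) / (sN * sN) by rewrite -norm; field.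
have [e he] : exists e : bool, 1 + (-1) ^+ e * s0 != 0.
  have [->|s0N1] := eqVneq s0 (-1).
    by exists true; rewrite expr1 mulN1r opprK.
  by exists false; rewrite expr0 mul1r addrC addr_eq0.
set eps := (-1) ^+ e : K.
set d := 2 * (1 + eps * s0).
have d0 : d != 0 by rewrite mulf_neq0.
set W := lin1N (1 + eps * s0) (- eps * sN).
set W' := lin1N ((1 + eps * s0) / d) (eps * sN / d).
have WW' : cinverse eta W W'.
  split; rewrite /W /W' lin1N_mul cone_lin1N -/cc ccE /d /eps;
    case: (e) he => he; rewrite /= ?expr0 ?expr1 ?mul1r in he *;
    by congr lin1N; field; rewrite ?sN0 ?he ?two.
have W'S : alpha W' ** lin1N s0 sN = cscale eps W'.
  rewrite /W' alpha_lin1N sign_odd_nat // lin1N_mul cscale_lin1N -/cc ccE /d /eps.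
  case: (e) he => he; rewrite /= ?expr0 ?expr1 ?mul1r in he *;
  by congr lin1N; field; rewrite ?sN0 ?he ?two.
set T := W' ** x.
have xWT : x = W ** T by rewrite /T -cmulA WW'.1 cmul1l.
have hT : homog e T.
  rewrite /homog /T alpha_mul -hx -(lin1N_central _ _ _ hn) -cmulA W'S.
  by rewrite cmulZl.
exists W, T; split=> //.
- exact: lin1N_central.
- by exists W'.
- by exists (U ** W); apply: inv_mul => //; apply: inv_sym.
- exact (homog_parity two hT).
Qed.

Lemma twist_Pset x S : cunit eta x -> x ** S = alpha x -> S ** alpha S = cone ->
  S = lin1N (S set0) (S setT) -> Pset eta x.
Proof.
move=> xu hx hS SE; have [sN0|sN0] := eqVneq (S setT) 0.
  rewrite SE sN0 -cscale_cone in hx hS; apply: scalar_twist_Pset hx _ => //.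
  move: hS; rewrite alpha_scale alpha_cone cmulZl cmulZr cmul1l cscaleA.
  by move/(congr1 (fun f : clif K n => f set0)); rewrite !ffunE eqxx !mulr1.
rewrite SE in hx hS; have [hn|hn] := boolP (odd n).
  exact: odd_pseudo_twist_Pset hn sN0 xu hx hS.
by case: (even_pseudo_twist_absurd hn sN0 xu hx hS).
Qed.

End TwistEquations.

Section Classification.
Variables (K : fieldType) (n : nat) (eta : 'I_n -> K).
Hypothesis etaNZ : forall i, eta i != 0.
Hypothesis two : (2 : K) != 0.
Hypothesis n2 : (1 < n)%N.
Implicit Types x S T U W X : clif K n.
Local Notation "x ** y" := (cmul eta x y) (at level 40, left associativity).
Local Notation c := (blade_coef eta).
Local Notation cone := (cone K n).
Local Notation eN := (blade K (setT : {set 'I_n})).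

Let n0 : (0 < n)%N := ltnW n2.

(* P <= Gamma^(j): (W T) X (W T)^-1 = T X T^-1 has the parity of X. *)
Lemma P_Gamma (j : bool) x : Pset eta x -> Gamma eta j x.
Proof.
case=> W [T [Wc [W' WW'] [T' TT'] /(parity_homog_ex two)[k hT] ->]].
have WT := inv_mul WW' TT'.
split; first by exists (T' ** W').
move=> U hU X /(parity_homog two) hX; have -> := inv_uniq hU WT.
have -> : W ** T ** X ** (T' ** W') = W ** (T ** X ** T') ** W' by rewrite !cmulA.
rewrite Wc cmulA WW'.1 cmul1r; apply/(parity_homog two).
have := homog_mul eta (homog_mul eta hT hX) (homog_inv TT' hT).
by rewrite addbC addbA addbb addFb.
Qed.

(* For x in Gamma^(j) with inverse U, S := U alpha(x) commutes with C^(j):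
   S X = U (alpha(x) X alpha(U)) alpha(x) = U (x X U) alpha(x) = X S. *)
Lemma Gamma_commutant (j : bool) x U : Gamma eta j x -> cinverse eta x U ->
  forall X, homog j X -> U ** alpha x ** X = X ** (U ** alpha x).
Proof.
case=> _ conj xU X hX.
have hxXU : homog j (x ** X ** U).
  by apply/(parity_homog two)/conj => //; apply/(parity_homog two).
have alpha_conj : alpha x ** X ** alpha U = x ** X ** U.
  move: hxXU; rewrite /homog !alpha_mul hX cmulZr cmulZl.
  by move/(congr1 (cscale ((-1) ^+ j))); rewrite !cscaleA sign_sq !cscale1.
have Ux : alpha U ** alpha x = cone by rewrite -alpha_mul xU.2 alpha_cone.
have -> : U ** alpha x ** X = U ** (alpha x ** X ** alpha U) ** alpha x.
  by rewrite -[LHS](cmul1r eta) -Ux !cmulA.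
by rewrite alpha_conj !cmulA -(cmulA _ U x) xU.2 cmul1l.
Qed.

(* An element commuting with C^(j) is twisted uniformly by the generators:
   for j odd they lie in C^(j); for j even use e_i = e_i e_k e_k / eta_k. *)
Lemma commutant_twist (j : bool) S : (forall X, homog j X -> S ** X = X ** S) ->
  exists R, forall k, cgen K k ** S = R ** cgen K k.
Proof.
case: j => comm; first by exists S => k; rewrite comm //; apply: cgen_homog.
pose k0 := Ordinal n0.
exists (cscale (eta k0)^-1 (cgen K k0 ** S ** cgen K k0)) => i.
rewrite cmulZl cmulA cmulA comm; last exact: (homog_mul eta (cgen_homog _ k0) (cgen_homog _ i)).
by rewrite -!cmulA cgen_sq !cmulZl cmul1l cscaleA mulVf // cscale1.
Qed.

(* Gamma^(j) <= P: S := U alpha(x) lies in span(1, e_N) and solves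
   x S = alpha(x), S alpha(S) = 1. *)
Lemma Gamma_P (j : bool) x : Gamma eta j x -> Pset eta x.
Proof.
move=> xG; have [[U xU] _] := xG.
pose S := U ** alpha x.
have [R SR] := commutant_twist (Gamma_commutant xG xU).
apply: (twist_Pset etaNZ two n0 (S := S)); first by exists U.
- by rewrite /S -cmulA xU.1 cmul1l.
- rewrite /S alpha_mul alphaK !cmulA -(cmulA _ (alpha x)) -alpha_mul xU.1.
  by rewrite alpha_cone cmul1l xU.2.
- exact (twist_lin1N etaNZ n0 two SR).
Qed.

Lemma parity_scale (j : bool) k x : parity j x -> parity j (cscale k x).
Proof. by move=> h A hA; rewrite ffunE h // mulr0. Qed.

(* n even: central elements are scalars, so P = C^x(0) u C^x(1). *)
Lemma Pset_even : ~~ odd n -> forall x, Pset eta x <->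
  ((cunit eta x /\ parity false x) \/ (cunit eta x /\ parity true x)).
Proof.
move=> hn x; split; last first.
  by case=> [][xu /(parity_homog two) hx]; apply: Pset_homog_unit hx.
case=> W [T [Wc [W' WW'] [T' TT'] hT ->]].
have Wgen : forall k, cgen K k ** W = W ** cgen K k by move=> k; rewrite Wc.
have W_scalar : W = cscale (W set0) cone.
  rewrite {1}(twist_lin1N etaNZ n0 two Wgen) (commute_top etaNZ n0 two hn Wgen).
  by rewrite -cscale_cone.
have WTu : cunit eta (W ** T) by exists (T' ** W'); apply: inv_mul.
rewrite W_scalar cmulZl cmul1l in WTu *.
by case: hT => hT; [left|right]; split => //; apply: parity_scale.
Qed.

(* n odd: e_N is a central unit, so an odd unit T equals e_N^-1 (e_N T)
   with e_N T even, giving P = Z^x C^x(0). *)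
Lemma Pset_odd : odd n -> forall x, Pset eta x <->
  exists W T, [/\ center eta W, cunit eta W, cunit eta T, parity false T & x = W ** T].
Proof.
move=> hn x; split; last first.
  by case=> W [T [Wc Wu Tu hT ->]]; exists W, T; split => //; left.
case=> W [T [Wc [W' WW'] [T' TT'] [hT|hT] ->]].
  by exists W, T; split => //; [exists W'|exists T'].
have cN : c setT setT != 0 by apply: coef_neq0.
set eN' := cscale (c setT setT)^-1 eN.
have eNu : cinverse eta eN eN'.
  by split; rewrite /eN' ?cmulZl ?cmulZr eN_sq cscaleA mulVf // cscale1.
have eN'c : center eta eN' by move=> y; rewrite /eN' cmulZl cmulZr eN_central.
exists (W ** eN'), (eN ** T); split.
- by move=> y; rewrite cmulA eN'c -cmulA Wc cmulA.
- by exists (eN ** W'); apply: inv_mul => //; apply: inv_sym.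
- by exists (T' ** eN'); apply: inv_mul.
- apply/(parity_homog two); apply: (homog_mul eta (i := true) (j := true)).
    by rewrite /homog alpha_eN sign_odd_nat.
  exact/(parity_homog two).
- by rewrite cmulA -(cmulA _ eN') eNu.2 cmul1l.
Qed.

Lemma theorem4_general : theorem4_concl eta.
Proof.
have PG j x : Pset eta x <-> Gamma eta j x by split; [apply: P_Gamma|apply: Gamma_P].
by split; [|split; [|split]] => [x|x|hn|hn]; [apply: PG|apply: PG|apply: Pset_even|apply: Pset_odd].
Qed.

End Classification.

Lemma two_neq0 (F : numFieldType) : (2 : F) != 0.
Proof. by rewrite pnatr_eq0. Qed.

Theorem mainTheorem4 (R : realType) (n : nat) (hn : (2 <= n)%N) :
  (forall (p q : nat) (e : p + q = n),
      theorem4_concl (sig_eta R n p)) /\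
  theorem4_concl (fun _ : 'I_n => (1 : R[i])).
Proof.
split.
  move=> p q _; apply: theorem4_general (two_neq0 _) hn.
  by move=> i; rewrite /sig_eta; case: ifP => _; rewrite ?oppr_eq0 oner_eq0.
by apply: theorem4_general (two_neq0 _) hn => i; rewrite oner_eq0.
Qed.
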